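(* Assume each bus has either no generator or at least two generators, and $x^*_n>0$ for all $n$; let $b^*_n=2a_nx^*_n+c_n$. Consider any execution of the Bid Adjustment Algorithm with $0<\beta_k<2a_n$ for all $n$ and $k\ge1$, and let $a_{\min}=\min_na_n$ and $\bar y=\sum_{i=1}^{N_b}y_i$. Then for all $k\ge1$, $$\|b(k+1)-b(k)\|^2\ \le\ \frac{\beta_k^2}{2a_{\min}^2}\|b(k)-b^*\|^2+8\beta_k^2\bar y^2.$$
   Context: Network: directed graph with buses $\{1,\dots,N_b\}$, edge set $\mathcal E$, line flow limits $\bar z_{ij}>0$, $G_i$ the set of generators at bus $i$ (the $G_i$ partition $\{1,\dots,N\}$), loads $y_i\ge0$. Generator $n$ has cost $f_n(x)=a_nx^2+c_nx$, $a_n>0$, $c_n\ge0$. DC-OPF: minimize $\sum_n f_n(x_n)$ over $(x,z)$ s.t. $\sum_{j:(i,j)\in\mathcal E}z_{ij}-\sum_{j:(j,i)\in\mathcal E}z_{ji}=\sum_{n\in G_i}x_n-y_i$ for all $i$, $|z_{ij}|\le\bar z_{ij}$, $x\ge0$; assumed feasible with unique optimal generation $x^*$. S-DC-OPF given bids $b\ge0$: same constraints, objective $\sum_n b_nx_n$. $\|\cdot\|$ is the Euclidean norm. Bid Adjustment Algorithm: given stepsizes $\beta_k>0$, each generator picks $b_n(1)\ge c_n$. For each $k\ge1$: $q_n(k)=\arg\max_{q\ge0}(b_n(k)q-f_n(q))$; the operator selects an optimizer $(x^{\rm opt}(k),z^{\rm opt}(k))$ of S-DC-OPF with bids $b(k)$;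 and $b_n(k+1)=[\,b_n(k)+\beta_k(x^{\rm opt}_n(k)-q_n(k))\,]^+$, where $[u]^+=\max\{0,u\}$. *)

From HB Require Import structures.
From mathcomp Require Import all_boot all_order all_algebra.
Set Implicit Arguments. Unset Strict Implicit. Unset Printing Implicit Defensive.
Import Order.TTheory GRing.Theory Num.Theory.
Local Open Scope ring_scope.

(* Network data:
   - buses 'I_Nb, generators 'I_N;
   - E : rel 'I_Nb is the directed edge set ((i,j) in E iff E i j);
   - bus n is the bus at which generator n sits (so G_i = [set n | bus n == i],
     and the G_i partition the generators);
   - zbar i j : line flow limit of edge (i,j); y i : load at bus i.
   Flows are z : 'I_Nb -> 'I_Nb -> R, only the values on edges matter. *)

Definition feasible (R : realFieldType) (Nb N : nat) (E : rel 'I_Nb)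
    (bus : 'I_N -> 'I_Nb) (zbar : 'I_Nb -> 'I_Nb -> R) (y : 'I_Nb -> R)
    (x : 'I_N -> R) (z : 'I_Nb -> 'I_Nb -> R) : Prop :=
  [/\ (forall i : 'I_Nb,
         \sum_(j : 'I_Nb | E i j) z i j - \sum_(j : 'I_Nb | E j i) z j i
         = \sum_(n : 'I_N | bus n == i) x n - y i),
      (forall i j : 'I_Nb, E i j -> `|z i j| <= zbar i j) &
      (forall n : 'I_N, 0 <= x n)].

Definition gen_cost (R : realFieldType) (a c : R) (x : R) : R := a * x ^+ 2 + c * x.

Definition dcopf_opt (R : realFieldType) (Nb N : nat) (E : rel 'I_Nb)
    (bus : 'I_N -> 'I_Nb) (zbar : 'I_Nb -> 'I_Nb -> R) (y : 'I_Nb -> R)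
    (a c : 'I_N -> R) (x : 'I_N -> R) (z : 'I_Nb -> 'I_Nb -> R) : Prop :=
  feasible E bus zbar y x z /\
  forall x' z', feasible E bus zbar y x' z' ->
    \sum_n gen_cost (a n) (c n) (x n) <= \sum_n gen_cost (a n) (c n) (x' n).

Definition sdcopf_opt (R : realFieldType) (Nb N : nat) (E : rel 'I_Nb)
    (bus : 'I_N -> 'I_Nb) (zbar : 'I_Nb -> 'I_Nb -> R) (y : 'I_Nb -> R)
    (b : 'I_N -> R) (x : 'I_N -> R) (z : 'I_Nb -> 'I_Nb -> R) : Prop :=
  feasible E bus zbar y x z /\
  forall x' z', feasible E bus zbar y x' z' ->
    \sum_n b n * x n <= \sum_n b n * x' n.

Definition is_argmax_profit (R : realFieldType) (a c b q : R) : Prop :=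
  0 <= q /\ forall q' : R, 0 <= q' ->
    b * q' - gen_cost a c q' <= b * q - gen_cost a c q.

Definition sqnorm (R : realFieldType) (N : nat) (v : 'I_N -> R) : R :=
  \sum_(n : 'I_N) v n ^+ 2.

From HB Require Import structures.
From mathcomp Require Import all_boot all_order all_algebra.
From mathcomp Require Import ring lra.
Set Implicit Arguments.
Unset Strict Implicit.
Unset Printing Implicit Defensive.

Import Order.TTheory GRing.Theory Num.Theory.
Local Open Scope ring_scope.

(* The bid update and the profit maximizer q_n = [(b_n - c_n) / (2 a_n)]^+ are
   both projections onto [0, +oo), hence nonexpansive.  Since
   x*_n = (b*_n - c_n) / (2 a_n) >= 0, this gives
   |b_n(k+1) - b_n(k)| <= beta_k |x^opt_n - q_n|
   and |q_n - x*_n| <= |b_n - b*_n| / (2 a_min).  The remaining term is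
   controlled by supply balance: x^opt and x* are nonnegative and both sum to
   the total load ybar, so ||x^opt - x*||^2 <= ||x^opt + x*||^2 <= (2 ybar)^2. *)

Lemma max0_sub_sqr_le (R : realDomainType) (u v : R) : 0 <= u ->
  (Num.max 0 v - u) ^+ 2 <= (v - u) ^+ 2.
Proof.
move=> u_ge0; case: (lerP 0 v) => [_ | v_lt0]; first by [].
rewrite !expr2; nra.
Qed.

Lemma argmax_profitE (R : realFieldType) (a c b q : R) : 0 < a ->
  is_argmax_profit a c b q -> q = Num.max 0 ((b - c) / (2 * a)).
Proof.
move=> a_gt0 [q_ge0 q_opt].
set p := (b - c) / (2 * a).
have b_def : b = 2 * a * p + c by rewrite /p; field; rewrite gt_eqF.
have sqr0 (t : R) : a * t ^+ 2 <= 0 -> t = 0.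
  by rewrite pmulr_rle0 // => t2_le0; apply/eqP; rewrite -sqrf_eq0 eq_le t2_le0 sqr_ge0.
rewrite b_def /gen_cost in q_opt; case: (lerP 0 p) => [p_ge0 | p_lt0].
- (* the profit at q' is a p^2 - a (q' - p)^2 *)
  have := q_opt p p_ge0; rewrite !expr2 => opt_p.
  by apply/eqP; rewrite -subr_eq0; apply/eqP/sqr0; rewrite !expr2; nra.
- have := q_opt 0 (lexx 0); rewrite !expr2 => opt_0.
  by apply: sqr0; rewrite !expr2; nra.
Qed.

Lemma argmax_profit_sub_sqr_le (R : realFieldType) (a c b q xs : R) :
  0 < a -> 0 <= xs -> is_argmax_profit a c b q ->
  (2 * a) ^+ 2 * (q - xs) ^+ 2 <= (b - (2 * a * xs + c)) ^+ 2.
Proof.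
move=> a_gt0 xs_ge0 /(argmax_profitE a_gt0) ->.
have -> : b - (2 * a * xs + c) = 2 * a * ((b - c) / (2 * a) - xs).
  by field; rewrite gt_eqF.
by rewrite [X in _ <= X]exprMn ler_wpM2l ?sqr_ge0 ?max0_sub_sqr_le.
Qed.

Lemma bid_step_sqr_le (R : realFieldType) (a amin c b q x xs beta : R) :
  0 < amin -> amin <= a -> 0 <= b -> 0 <= xs -> is_argmax_profit a c b q ->
  (Num.max 0 (b + beta * (x - q)) - b) ^+ 2
    <= beta ^+ 2 / (2 * amin ^+ 2) * (b - (2 * a * xs + c)) ^+ 2
       + 2 * beta ^+ 2 * (x - xs) ^+ 2.
Proof.
move=> amin_gt0 amin_le b_ge0 xs_ge0 q_max.
have a_gt0 : 0 < a := lt_le_trans amin_gt0 amin_le.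
have step_le := max0_sub_sqr_le (b + beta * (x - q)) b_ge0.
rewrite addrAC subrr add0r exprMn in step_le.
have q_dev := argmax_profit_sub_sqr_le a_gt0 xs_ge0 q_max.
set d := (b - _) ^+ 2 in q_dev *.
have amin_dev : (2 * amin) ^+ 2 * (q - xs) ^+ 2 <= d.
  apply: le_trans q_dev; rewrite ler_wpM2r ?sqr_ge0 //.
  by rewrite ler_sqr ?nnegrE ?ler_pM2l // mulr_ge0 // ltW.
have q_le : (q - xs) ^+ 2 <= d / (4 * amin ^+ 2).
  rewrite ler_pdivlMr ?mulr_gt0 ?exprn_gt0 // mulrC.
  by apply: le_trans amin_dev; rewrite exprMn ler_wpM2r ?sqr_ge0 // expr2; lra.
have x_le : (x - q) ^+ 2 <= 2 * (x - xs) ^+ 2 + 2 * (d / (4 * amin ^+ 2)).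
  have := sqr_ge0 (x - xs + (q - xs)); move: q_le; rewrite !expr2; nra.
apply: le_trans step_le _.
have -> : beta ^+ 2 / (2 * amin ^+ 2) * d
          = 2 * beta ^+ 2 * (d / (4 * amin ^+ 2)).
  by field; rewrite gt_eqF ?exprn_gt0.
have := ler_wpM2l (sqr_ge0 beta) x_le; lra.
Qed.

Lemma sum_sqr_le_sqr_sum (R : realDomainType) (I : finType) (u : I -> R) :
  (forall i, 0 <= u i) -> \sum_i u i ^+ 2 <= (\sum_i u i) ^+ 2.
Proof.
move=> u_ge0; rewrite [X in _ <= X]expr2 mulr_suml.
apply: ler_sum => i _; rewrite expr2 ler_wpM2l //.
by rewrite (bigD1 i) //= lerDl sumr_ge0.
Qed.

Lemma sum_sub_sqr_le (R : realDomainType) (I : finType) (u v : I -> R) (s : R) :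
  (forall i, 0 <= u i) -> (forall i, 0 <= v i) ->
  \sum_i u i = s -> \sum_i v i = s ->
  \sum_i (u i - v i) ^+ 2 <= 4 * s ^+ 2.
Proof.
move=> u_ge0 v_ge0 sum_u sum_v.
apply: (@le_trans _ _ (\sum_i (u i + v i) ^+ 2)).
  apply: ler_sum => i _; have := u_ge0 i; have := v_ge0 i; rewrite !expr2; nra.
apply: le_trans (sum_sqr_le_sqr_sum _) _ => [i|]; first by rewrite addr_ge0.
by rewrite big_split /= sum_u sum_v !expr2; lra.
Qed.

Lemma feasible_supply_eq_load (R : realFieldType) (Nb N : nat) (E : rel 'I_Nb)
    (bus : 'I_N -> 'I_Nb) (zbar : 'I_Nb -> 'I_Nb -> R) (y : 'I_Nb -> R) x z :
  feasible E bus zbar y x z -> \sum_n x n = \sum_i y i.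
Proof.
move=> [balance _ _].
(* every line flow leaves one bus and enters another *)
have net_out0 : \sum_i (\sum_(j | E i j) z i j - \sum_(j | E j i) z j i) = 0.
  by rewrite sumrB [X in _ - X](exchange_big_dep xpredT) //= subrr.
rewrite (eq_bigr _ (fun i _ => balance i)) sumrB in net_out0.
rewrite (partition_big bus xpredT) //=.
by apply/eqP; rewrite -subr_eq0 net_out0.
Qed.

Theorem lemma4p4 (R : realFieldType) (Nb N : nat) (E : rel 'I_Nb)
    (bus : 'I_N -> 'I_Nb) (zbar : 'I_Nb -> 'I_Nb -> R) (y : 'I_Nb -> R)
    (a c : 'I_N -> R)
    (* network / cost assumptions *)
    (hzbar : forall i j : 'I_Nb, E i j -> 0 < zbar i j)
    (hy : forall i : 'I_Nb, 0 <= y i)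
    (ha : forall n : 'I_N, 0 < a n)
    (hc : forall n : 'I_N, 0 <= c n)
    (* DC-OPF feasible with unique optimal generation xstar *)
    (xstar : 'I_N -> R) (zstar : 'I_Nb -> 'I_Nb -> R)
    (hopt : dcopf_opt E bus zbar y a c xstar zstar)
    (huniq : forall x z, dcopf_opt E bus zbar y a c x z -> x = xstar)
    (* each bus has no generator or at least two *)
    (hgen : forall i : 'I_Nb, #|[set n : 'I_N | bus n == i]| != 1%N)
    (hxpos : forall n : 'I_N, 0 < xstar n)
    (* an execution of the Bid Adjustment Algorithm *)
    (beta : nat -> R) (b : nat -> 'I_N -> R) (q : nat -> 'I_N -> R)
    (xopt : nat -> 'I_N -> R) (zopt : nat -> 'I_Nb -> 'I_Nb -> R)
    (hbeta : forall k : nat, (1 <= k)%N -> forall n : 'I_N, 0 < beta k < 2 * a n)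
    (hb1 : forall n : 'I_N, c n <= b 1%N n)
    (hq : forall k : nat, (1 <= k)%N -> forall n : 'I_N,
        is_argmax_profit (a n) (c n) (b k n) (q k n))
    (hxopt : forall k : nat, (1 <= k)%N ->
        sdcopf_opt E bus zbar y (b k) (xopt k) (zopt k))
    (hupd : forall k : nat, (1 <= k)%N -> forall n : 'I_N,
        b k.+1 n = Num.max 0 (b k n + beta k * (xopt k n - q k n)))
    (* a_min = min_n a_n *)
    (amin : R) (hamin_lb : forall n : 'I_N, amin <= a n)
    (hamin_att : exists n : 'I_N, a n = amin) :
  let bstar := fun n : 'I_N => 2 * a n * xstar n + c n in
  let ybar := \sum_(i : 'I_Nb) y i in
  forall k : nat, (1 <= k)%N ->
    sqnorm (fun n => b k.+1 n - b k n)
      <= beta k ^+ 2 / (2 * amin ^+ 2) * sqnorm (fun n => b k n - bstar n)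
         + 8 * beta k ^+ 2 * ybar ^+ 2.
Proof.
move=> bstar ybar k k_ge1.
have [n0 a_n0] := hamin_att.
have amin_gt0 : 0 < amin by rewrite -a_n0.
have b_ge0 n : 0 <= b k n.
  case: k k_ge1 => [|[|k]] // _; first exact: le_trans (hc n) (hb1 n).
  by rewrite hupd // le_max lexx.
have [feas_k _] := hxopt k k_ge1.
have [feas_star _] := hopt.
have [[_ _ xopt_ge0] [_ _ xstar_ge0]] := (feas_k, feas_star).
have step n : (b k.+1 n - b k n) ^+ 2
    <= beta k ^+ 2 / (2 * amin ^+ 2) * (b k n - bstar n) ^+ 2
       + 2 * beta k ^+ 2 * (xopt k n - xstar n) ^+ 2.
  by rewrite hupd //; apply: bid_step_sqr_le; rewrite ?hamin_lb //; exact: hq.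
apply: le_trans (ler_sum _ (fun n _ => step n)) _.
rewrite /sqnorm big_split /= -!mulr_sumr lerD2l.
have gen_dev := sum_sub_sqr_le xopt_ge0 xstar_ge0
  (feasible_supply_eq_load feas_k) (feasible_supply_eq_load feas_star).
rewrite -/ybar in gen_dev.
have -> : 8 * beta k ^+ 2 * ybar ^+ 2 = 2 * beta k ^+ 2 * (4 * ybar ^+ 2) by ring.
by rewrite ler_wpM2l // mulr_ge0 // sqr_ge0.
Qed.
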